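(* Let $u\in[-\infty,\infty)$, $v\in(u,\infty]$, $L,\mathfrak L,d,\mathfrak d\in\mathbb N$, $\theta\in\mathbb R^d$, $l_0,\dots,l_L,\mathfrak l_0,\dots,\mathfrak l_{\mathfrak L}\in\mathbb N$ satisfy $d\ge\sum_{i=1}^Ll_i(l_{i-1}+1)$, $\mathfrak d\ge\sum_{i=1}^{\mathfrak L}\mathfrak l_i(\mathfrak l_{i-1}+1)$, $\mathfrak L\ge L$, $\mathfrak l_0=l_0$, $\mathfrak l_{\mathfrak L}=l_L$, $\mathfrak l_i\ge l_i$ for all $i\in\mathbb N\cap[0,L)$, and $\mathfrak l_i\ge 2l_L$ for all $i\in\mathbb N\cap(L-1,\mathfrak L)$. Then there exists $\vartheta\in\mathbb R^{\mathfrak d}$ such that $\|\vartheta\|_\infty\le\max\{1,\|\theta\|_\infty\}$ and $\mathscr N^{\vartheta,(\mathfrak l_0,\dots,\mathfrak l_{\mathfrak L})}_{u,v}=\mathscr N^{\theta,(l_0,\dots,l_L)}_{u,v}$.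
   Context: $\mathbb N=\{1,2,\dots\}$; $\|\cdot\|_\infty$ is the maximum norm. For $r,s\in\mathbb N$, $k\in\mathbb N_0$, $\theta\in\mathbb R^{n}$ with $n\ge k+rs+r$, $\mathcal A^{\theta,k}_{r,s}\colon\mathbb R^s\to\mathbb R^r$ has $i$-th component $x\mapsto\sum_{j=1}^s\theta_{k+(i-1)s+j}x_j+\theta_{k+rs+i}$. $\mathfrak C_{u,v,n}$ applies $y\mapsto\max\{u,\min\{y,v\}\}$ componentwise on $\mathbb R^n$ and $\mathfrak R_n$ applies $y\mapsto\max\{y,0\}$ componentwise. For $l=(l_0,\dots,l_L)$, $\theta\in\mathbb R^n$ with $n\ge\sum_kl_k(l_{k-1}+1)$ and $s_k=\sum_{j=1}^kl_j(l_{j-1}+1)$, $\mathscr N^{\theta,l}_{u,v}=\mathfrak C_{u,v,l_L}\circ\mathcal A^{\theta,s_{L-1}}_{l_L,l_{L-1}}\circ\mathfrak R_{l_{L-1}}\circ\cdots\circ\mathfrak R_{l_1}\circ\mathcal A^{\theta,0}_{l_1,l_0}\colon\mathbb R^{l_0}\to\mathbb R^{l_L}$ (for $L=1$ just $\mathfrak C_{u,v,l_1}\circ\mathcal A^{\theta,0}_{l_1,l_0}$). *)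

From HB Require Import structures.
From mathcomp Require Import all_boot all_order all_algebra.
From mathcomp Require Import reals constructive_ereal.
Set Implicit Arguments. Unset Strict Implicit. Unset Printing Implicit Defensive.
Import Order.TTheory GRing.Theory Num.Theory.
Local Open Scope ring_scope.

Section DNN.
Variable R : realType.

(* Vectors in R^n are sequences of length n; indices are 0-based here:
   the paper's theta_m (1-based) is nth 0 theta (m-1). *)

Definition affine (theta : seq R) (k r s : nat) (x : seq R) : seq R :=
  [seq \sum_(j < s) nth 0 theta (k + i * s + j) * nth 0 x j
       + nth 0 theta (k + r * s + i) | i <- iota 0 r].

Definition relu (x : seq R) : seq R := [seq Num.max y 0 | y <- x].

(* componentwise clipping y |-> max{u, min{y, v}}, u v extended reals;
   the result is always finite when u <> +oo and v <> -oo. *)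
Definition clip (u v : \bar R) (x : seq R) : seq R :=
  [seq fine (Order.max u (Order.min (y%:E) v)) | y <- x].

Fixpoint net_aux (theta : seq R) (u v : \bar R) (k prev : nat) (ls : seq nat)
  (x : seq R) : seq R :=
  match ls with
  | [::] => x
  | [:: r] => clip u v (affine theta k r prev x)
  | r :: ls' => net_aux theta u v (k + r * (prev + 1)) r ls'
                        (relu (affine theta k r prev x))
  end.

Definition realization (theta : seq R) (l : seq nat) (u v : \bar R)
  (x : seq R) : seq R :=
  match l with
  | [::] => x
  | l0 :: ls => net_aux theta u v 0 l0 ls x
  end.

Definition maxnorm (theta : seq R) : R :=
  \big[Num.max/0]_(t <- theta) `|t|.

End DNN.

(* Padding every weight matrix and bias vector with zeros embeds a network into a wider one:
   the padded hidden states are the original ones followed by zeros, which the padded columns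
   ignore.  The extra depth is bridged by the identity y = max(y,0) - max(-y,0): the last
   original layer is doubled to output (y, -y), so that after the ReLU the state is (y+, y-);
   every further hidden layer maps (a, b) to (a - b, b - a), which the ReLU sends back to
   (y+, y-); and the output layer computes y+ - y- = y.  This is where the widths 2 l_L are
   needed, and every new parameter is 0, 1, -1 or plus or minus a parameter of theta. *)

From HB Require Import structures.
From mathcomp Require Import all_boot all_order all_algebra.
From mathcomp Require Import reals constructive_ereal.
From mathcomp Require Import zify.
Import Order.TTheory GRing.Theory Num.Theory.
Local Open Scope ring_scope.
Set Implicit Arguments. Unset Strict Implicit. Unset Printing Implicit Defensive.

Section Layers.
Variable R : realType.
Implicit Types (x y z theta : seq R) (W : nat -> nat -> R) (b : nat -> R).

Definition dense (r s : nat) W b x : seq R :=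
  mkseq (fun i => \sum_(j < s) W i j * nth 0 x j + b i) r.

Definition layer_weights theta (s : nat) : nat -> nat -> R :=
  fun i j => nth 0 theta (i * s + j).

Definition layer_biases theta (r s : nat) : nat -> R := fun i => nth 0 theta (r * s + i).

Lemma affine0E theta r s x :
  affine theta 0 r s x = dense r s (layer_weights theta s) (layer_biases theta r s) x.
Proof. by []. Qed.

Lemma size_dense r s W b x : size (dense r s W b x) = r.
Proof. exact: size_mkseq. Qed.

Lemma nth_dense r s W b x i : (i < r)%N ->
  nth 0 (dense r s W b x) i = \sum_(j < s) W i j * nth 0 x j + b i.
Proof. exact: nth_mkseq. Qed.

Lemma dense_cat r s W b x y : size x = s -> dense r s W b (x ++ y) = dense r s W b x.
Proof.
move=> sx; apply: eq_mkseq => i; congr (_ + _).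
by apply: eq_bigr => j _; rewrite nth_cat sx ltn_ord.
Qed.

Definition layer_vec (r s : nat) W b : seq R :=
  mkseq (fun m => if (m < r * s)%N then W (m %/ s)%N (m %% s)%N else b (m - r * s)%N)
    (r * (s + 1)).

Lemma size_layer_vec r s W b : size (layer_vec r s W b) = (r * (s + 1))%N.
Proof. exact: size_mkseq. Qed.

Lemma affine_layer_vec r s W b t x :
  affine (layer_vec r s W b ++ t) 0 r s x = dense r s W b x.
Proof.
apply/eq_in_map => i; rewrite mem_iota add0n => /andP[_ ir].
rewrite !add0n !nth_cat size_layer_vec.
have ->: (r * s + i < r * (s + 1))%N by nia.
rewrite nth_mkseq; last by nia.
rewrite ltnNge leq_addr addKn /=; congr (_ + _).
apply: eq_bigr => j _; have js := ltn_ord j.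
rewrite nth_cat size_layer_vec.
have ->: (i * s + j < r * (s + 1))%N by nia.
rewrite nth_mkseq; last by nia.
have ->: (i * s + j < r * s)%N by nia.
by rewrite divnMDl ?divn_small ?addn0 ?modnMDl ?modn_small //; lia.
Qed.

Definition embedW (r s : nat) W : nat -> nat -> R :=
  fun i j => if (i < r)%N && (j < s)%N then W i j else 0.

Definition embedb (r : nat) b : nat -> R := fun i => if (i < r)%N then b i else 0.

Lemma dense_embed r r' s s' W b x : (r <= r')%N -> (s <= s')%N ->
  dense r' s' (embedW r s W) (embedb r b) x = dense r s W b x ++ nseq (r' - r) 0.
Proof.
move=> rr' ss'; apply: (@eq_from_nth _ 0).
  by rewrite size_cat size_nseq !size_dense subnKC.
rewrite size_dense => i ir'; rewrite nth_dense // nth_cat size_dense /embedb.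
case: ltnP => ir; last first.
  by rewrite nth_nseq big1 ?addr0 ?if_same // => j _; rewrite /embedW ltnNge ir mul0r.
rewrite nth_dense // (big_ord_widen s' (fun j => W i j * nth 0 x j) ss').
rewrite [in RHS]big_mkcond /=.
by congr (_ + _); apply: eq_bigr => j _; rewrite /embedW ir /=; case: ifP; rewrite ?mul0r.
Qed.

Definition twin (n : nat) b : nat -> R :=
  fun i => if (i < n)%N then b i else if (i < 2 * n)%N then - b (i - n)%N else 0.

Definition twinW (n : nat) W : nat -> nat -> R := fun i j => twin n (W ^~ j) i.

Lemma dense_twin n r s W b x : (2 * n <= r)%N ->
  dense r s (twinW n W) (twin n b) x =
  dense n s W b x ++ map -%R (dense n s W b x) ++ nseq (r - 2 * n) 0.
Proof.
move=> nr; apply: (@eq_from_nth _ 0).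
  by rewrite !size_cat size_nseq !size_dense size_map size_dense; lia.
rewrite size_dense => i ir; rewrite nth_dense // /twinW /twin nth_cat size_dense.
case: ltnP => ni; first by rewrite nth_dense.
rewrite nth_cat size_map size_dense.
have -> : (i - n < n)%N = (i < 2 * n)%N by lia.
case: ltnP => i2n; last first.
  by rewrite nth_nseq if_same big1 ?addr0 // => j _; rewrite mul0r.
rewrite (nth_map 0) ?size_dense ?nth_dense; try lia.
by rewrite opprD -sumrN; congr (_ + _); apply: eq_bigr => j _; rewrite mulNr.
Qed.

Definition posneg z : seq R := relu z ++ relu (map -%R z).

Lemma relu_cat x y : relu (x ++ y) = relu x ++ relu y.
Proof. exact: map_cat. Qed.

Lemma relu_nseq0 k : relu (nseq k 0) = nseq k (0 : R).
Proof. by rewrite /relu map_nseq maxxx. Qed.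

Lemma maxr0_sub_maxNr0 (y : R) : Num.max y 0 - Num.max (- y) 0 = y.
Proof.
by rewrite -[X in Num.max (- y) X]oppr0 -oppr_min opprK addrC addr_min_max addr0.
Qed.

Definition diffW (n : nat) : nat -> nat -> R :=
  fun i j => (j == i)%:R - (j == (i + n)%N)%:R.

Lemma sum_delta (s i : nat) (F : nat -> R) :
  (i < s)%N -> \sum_(j < s) (j == i :> nat)%:R * F j = F i.
Proof.
move=> i_lt_s; rewrite (bigD1 (Ordinal i_lt_s)) //= eqxx mul1r big1 ?addr0 // => j.
by rewrite -val_eqE /= => /negbTE ->; rewrite mul0r.
Qed.

Lemma dense_diff n s z y : size z = n -> (2 * n <= s)%N ->
  dense n s (diffW n) (fun=> 0) (posneg z ++ y) = z.
Proof.
move=> sz ns; apply: (@eq_from_nth _ 0); rewrite size_dense // => i ni.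
rewrite nth_dense // addr0.
under eq_bigr => j _ do rewrite /diffW mulrBl.
rewrite sumrB !sum_delta; try lia.
rewrite /posneg -catA !nth_cat !size_map sz ni ltnNge leq_addl /= addnK ni.
by rewrite !(nth_map 0) ?size_map ?sz // maxr0_sub_maxNr0.
Qed.

Lemma norm_embedW_le r s W c i j :
  0 <= c -> (forall i j, `|W i j| <= c) -> `|embedW r s W i j| <= c.
Proof. by move=> c0 Wc; rewrite /embedW; case: ifP; rewrite ?normr0. Qed.

Lemma norm_embedb_le r b c i : 0 <= c -> (forall i, `|b i| <= c) -> `|embedb r b i| <= c.
Proof. by move=> c0 bc; rewrite /embedb; case: ifP; rewrite ?normr0. Qed.

Lemma norm_twin_le n b c i : 0 <= c -> (forall i, `|b i| <= c) -> `|twin n b i| <= c.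
Proof.
by move=> c0 bc; rewrite /twin; case: ifP => _; [|case: ifP => _]; rewrite ?normrN ?normr0.
Qed.

Lemma norm_diffW_le n i j : `|diffW n i j| <= 1.
Proof.
rewrite /diffW; case: eqP => _; case: eqP => _;
  by rewrite ?subrr ?subr0 ?sub0r ?normrN ?normr1 ?normr0.
Qed.

End Layers.

Section MaxNorm.
Variable R : realType.
Implicit Types (s theta : seq R) (c : R).

Lemma maxnorm_ge0 s : 0 <= maxnorm s.
Proof. exact: bigmax_ge_id. Qed.

Lemma norm_le_maxnorm s t : t \in s -> `|t| <= maxnorm s.
Proof. by move=> ts; rewrite /maxnorm (le_bigmax_seq _ _ _ (fun t => `|t|) ts). Qed.

Lemma norm_nth_le_maxnorm s m : `|nth 0 s m| <= maxnorm s.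
Proof.
case: (ltnP m (size s)) => ms; first by rewrite norm_le_maxnorm ?mem_nth.
by rewrite nth_default // normr0 maxnorm_ge0.
Qed.

Lemma maxnorm_le s c : 0 <= c -> (forall t, t \in s -> `|t| <= c) -> maxnorm s <= c.
Proof. by move=> c0 sc; rewrite /maxnorm big_seq; apply: bigmax_le. Qed.

Lemma maxnorm_cat_le s1 s2 c :
  maxnorm s1 <= c -> maxnorm s2 <= c -> maxnorm (s1 ++ s2) <= c.
Proof.
move=> s1c s2c; apply: maxnorm_le => [|t]; first exact: le_trans (maxnorm_ge0 _) s1c.
by rewrite mem_cat => /orP[] /norm_le_maxnorm /le_trans; apply.
Qed.

Lemma maxnorm_drop k s : maxnorm (drop k s) <= maxnorm s.
Proof. by apply: maxnorm_le (maxnorm_ge0 _) _ => t /mem_drop /norm_le_maxnorm. Qed.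

Lemma maxnorm_nseq0 k : maxnorm (nseq k (0 : R)) = 0.
Proof.
apply/le_anti; rewrite maxnorm_ge0 andbT.
by apply: maxnorm_le => // t /nseqP[-> _]; rewrite normr0.
Qed.

Lemma maxnorm_layer_vec (r q : nat) (W : nat -> nat -> R) (b : nat -> R) c :
  0 <= c -> (forall i j, `|W i j| <= c) -> (forall i, `|b i| <= c) ->
  maxnorm (layer_vec r q W b) <= c.
Proof. by move=> c0 Wc bc; apply: maxnorm_le => // t /mapP[m _ ->]; case: ifP. Qed.

End MaxNorm.

Fixpoint nparams (p : nat) (ws : seq nat) : nat :=
  if ws is r :: ws' then r * (p + 1) + nparams r ws' else 0.

Lemma nparams_sum ws :
  nparams (head 0 ws) (behead ws) = \sum_(1 <= i < size ws) nth 0 ws i * (nth 0 ws i.-1 + 1).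
Proof.
case: ws => [|p ws]; first by rewrite big_geq.
rewrite big_add1 /=; elim: ws p => [|r ws IH] p; first by rewrite big_geq.
by rewrite /= big_nat_recl // IH.
Qed.

Section Realization.
Variables (R : realType) (u v : \bar R).
Implicit Types (x theta t : seq R) (W : nat -> nat -> R) (b : nat -> R).

Lemma affine_drop theta k m r s x :
  affine theta (k + m) r s x = affine (drop k theta) m r s x.
Proof.
apply: eq_map => i; rewrite nth_drop !addnA; congr (_ + _).
by apply: eq_bigr => j _; rewrite nth_drop !addnA.
Qed.

Lemma net_aux_cons theta k p r a ws x :
  net_aux theta u v k p [:: r, a & ws] x =
  net_aux theta u v (k + r * (p + 1)) r (a :: ws) (relu (affine theta k r p x)).
Proof. by []. Qed.

Lemma net_aux_drop theta k m p ws x :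
  net_aux theta u v (k + m) p ws x = net_aux (drop k theta) u v m p ws x.
Proof.
elim: ws m p x => [|r [|a ws] IH] m p x //; first by rewrite /= affine_drop.
by rewrite !net_aux_cons -addnA IH affine_drop.
Qed.

Lemma realization_cons theta p r a ws x :
  realization theta [:: p, r, a & ws] u v x =
  realization (drop (r * (p + 1)) theta) [:: r, a & ws] u v (relu (affine theta 0 r p x)).
Proof.
rewrite -[LHS]/(net_aux theta u v 0 p _ x) -[RHS]/(net_aux _ u v 0 r _ _).
by rewrite net_aux_cons -net_aux_drop add0n addn0.
Qed.

Lemma realization_layer_vec_cons p r a ws W b t x :
  realization (layer_vec r p W b ++ t) [:: p, r, a & ws] u v x =
  realization t [:: r, a & ws] u v (relu (dense r p W b x)).
Proof. by rewrite realization_cons affine_layer_vec drop_size_cat ?size_layer_vec. Qed.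

Lemma realization_layer_vec_last p r W b t x :
  realization (layer_vec r p W b ++ t) [:: p; r] u v x = clip u v (dense r p W b x).
Proof. by rewrite /= affine_layer_vec. Qed.

End Realization.

Section Embedding.
Variables (R : realType) (u v : \bar R) (c : R).
Hypothesis c_ge1 : 1 <= c.
Implicit Types (x z t theta : seq R).

Let c_ge0 : 0 <= c := le_trans ler01 c_ge1.

Lemma posneg_decoder_exists m (ws : seq nat) (n : nat) :
  size ws = m.+2 -> nth 0 ws m.+1 = n ->
  (forall i, (i <= m)%N -> (2 * n <= nth 0 ws i)%N) ->
  exists vartheta, size vartheta = nparams (head 0 ws) (behead ws) /\ maxnorm vartheta <= c /\
    forall z t, size z = n ->
      realization (vartheta ++ t) ws u v (posneg z ++ nseq (head 0 ws - 2 * n)%N 0) = clip u v z.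
Proof.
have diffW_le i j : `|diffW R n i j| <= c := le_trans (norm_diffW_le R n i j) c_ge1.
have zero_le (i : nat) : `|(0 : R)| <= c by rewrite normr0.
elim: m ws => [|m IH] [|p [|w [|a ws]]] // size_ws wn wide; rewrite /= in wn.
  exists (layer_vec n p (diffW R n) (fun=> 0)).
  split; first by rewrite size_layer_vec -wn /= addn0.
  split; first exact: maxnorm_layer_vec.
  by move=> z t sz; rewrite wn realization_layer_vec_last dense_diff ?(wide 0%N).
have [vt [size_vt [norm_vt real_vt]]] :=
  IH [:: w, a & ws] (succn_inj size_ws) wn (fun i => wide i.+1).
exists (layer_vec w p (twinW n (diffW R n)) (twin n (fun=> 0)) ++ vt).
split; first by rewrite size_cat size_layer_vec size_vt.
split.
  apply: maxnorm_cat_le norm_vt; apply: maxnorm_layer_vec => // *; exact: norm_twin_le.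
move=> z t sz; rewrite -catA realization_layer_vec_cons dense_twin ?(wide 1%N) //.
by rewrite dense_diff ?(wide 0%N) // !relu_cat relu_nseq0 catA real_vt.
Qed.

Lemma norm_embed_weights_le r s theta i j :
  maxnorm theta <= c -> `|embedW r s (layer_weights theta s) i j| <= c.
Proof.
move=> norm_theta; apply: norm_embedW_le => // *.
exact: le_trans (norm_nth_le_maxnorm _ _) norm_theta.
Qed.

Lemma norm_embed_biases_le r s theta i :
  maxnorm theta <= c -> `|embedb r (layer_biases theta r s) i| <= c.
Proof.
move=> norm_theta; apply: norm_embedb_le => // *.
exact: le_trans (norm_nth_le_maxnorm _ _) norm_theta.
Qed.

Lemma last_layer_embed_exists LL (ll : seq nat) (p n : nat) theta :
  maxnorm theta <= c -> size ll = LL.+2 -> (p <= head 0 ll)%N -> nth 0 ll LL.+1 = n ->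
  (forall i, (0 < i <= LL)%N -> (2 * n <= nth 0 ll i)%N) ->
  exists vartheta, size vartheta = nparams (head 0 ll) (behead ll) /\ maxnorm vartheta <= c /\
    forall x t, size x = p ->
      realization (vartheta ++ t) ll u v (x ++ nseq (head 0 ll - p) 0) =
      realization theta [:: p; n] u v x.
Proof.
move=> norm_theta; set W := embedW n p (layer_weights theta p).
set b := embedb n (layer_biases theta n p).
have W_le i j : `|W i j| <= c by exact: norm_embed_weights_le.
have b_le i : `|b i| <= c by exact: norm_embed_biases_le.
case: LL ll => [|LL] [|p' [|w [|a ws]]] // size_ll p_le wn wide; rewrite /= in p_le wn.
  exists (layer_vec n p' W b); split; first by rewrite size_layer_vec -wn /= addn0.
  split; first exact: maxnorm_layer_vec.
  move=> x t sx; rewrite wn realization_layer_vec_last dense_embed // subnn cats0.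
  by rewrite dense_cat.
have [vt [size_vt [norm_vt real_vt]]] :=
  posneg_decoder_exists (ws := [:: w, a & ws]) (succn_inj size_ll) wn (fun i => wide i.+1).
exists (layer_vec w p' (twinW n W) (twin n b) ++ vt).
split; first by rewrite size_cat size_layer_vec size_vt.
split.
  apply: maxnorm_cat_le norm_vt; apply: maxnorm_layer_vec => // *; exact: norm_twin_le.
move=> x t sx; rewrite -catA realization_layer_vec_cons dense_twin ?(wide 1%N) //.
rewrite dense_embed // subnn cats0 dense_cat // !relu_cat relu_nseq0 catA real_vt //.
exact: size_dense.
Qed.

Lemma net_embed_exists L LL (l ll : seq nat) theta :
  maxnorm theta <= c -> size l = L.+2 -> size ll = LL.+2 -> (L <= LL)%N ->
  (forall i, (i <= L)%N -> (nth 0 l i <= nth 0 ll i)%N) ->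
  nth 0 ll LL.+1 = nth 0 l L.+1 ->
  (forall i, (L < i <= LL)%N -> (2 * nth 0 l L.+1 <= nth 0 ll i)%N) ->
  exists vartheta, size vartheta = nparams (head 0 ll) (behead ll) /\ maxnorm vartheta <= c /\
    forall x t, size x = head 0 l ->
      realization (vartheta ++ t) ll u v (x ++ nseq (head 0 ll - head 0 l) 0) =
      realization theta l u v x.
Proof.
elim: L LL l ll theta => [|L IH] LL l ll theta norm_theta size_l size_ll le_LL le_ll lastL wide.
  case: l size_l le_ll lastL wide => [|p [|r [|? ?]]] // _ le_ll lastL wide.
  exact: (last_layer_embed_exists norm_theta size_ll (le_ll 0%N isT) lastL wide).
case: l size_l le_ll lastL wide => [|p [|r [|a l]]] // size_l le_ll lastL wide.
case: LL size_ll le_LL lastL wide => // LL size_ll le_LL lastL wide.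
case: ll size_ll le_ll lastL wide => [|p' [|w [|b ll]]] // size_ll le_ll lastL wide.
have [vt [size_vt [norm_vt real_vt]]] :=
  IH LL [:: r, a & l] [:: w, b & ll] (drop (r * (p + 1)) theta)
    (le_trans (maxnorm_drop _ _) norm_theta) (succn_inj size_l) (succn_inj size_ll) le_LL
    (fun i => le_ll i.+1) lastL (fun i => wide i.+1).
exists (layer_vec w p' (embedW r p (layer_weights theta p))
                      (embedb r (layer_biases theta r p)) ++ vt).
split; first by rewrite size_cat size_layer_vec size_vt.
split.
  apply: maxnorm_cat_le norm_vt; apply: maxnorm_layer_vec => // *.
    exact: norm_embed_weights_le.
  exact: norm_embed_biases_le.
move=> x t sx; rewrite -catA realization_layer_vec_cons realization_cons affine0E.
rewrite dense_embed ?(le_ll 0%N) ?(le_ll 1%N) // dense_cat // relu_cat relu_nseq0 real_vt //.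
by rewrite size_map size_dense.
Qed.

End Embedding.

Theorem lemma2p30 (R : realType) (u v : \bar R) (L LL d dd : nat)
  (theta : seq R) (l ll : seq nat) :
  u != +oo%E -> (u < v)%E ->
  (0 < L)%N -> (0 < LL)%N -> (0 < d)%N -> (0 < dd)%N ->
  size theta = d ->
  size l = L.+1 -> size ll = LL.+1 ->
  all (fun n => 0 < n)%N l -> all (fun n => 0 < n)%N ll ->
  (\sum_(1 <= i < L.+1) nth 0 l i * (nth 0 l i.-1 + 1) <= d)%N ->
  (\sum_(1 <= i < LL.+1) nth 0 ll i * (nth 0 ll i.-1 + 1) <= dd)%N ->
  (L <= LL)%N ->
  nth 0 ll 0 = nth 0 l 0 ->
  nth 0 ll LL = nth 0 l L ->
  (forall i : nat, (0 < i < L)%N -> (nth 0 l i <= nth 0 ll i)%N) ->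
  (forall i : nat, (L <= i < LL)%N -> (2 * nth 0 l L <= nth 0 ll i)%N) ->
  exists vartheta : seq R,
    size vartheta = dd /\
    maxnorm vartheta <= Num.max 1 (maxnorm theta) /\
    (forall x : seq R, size x = nth 0 l 0 ->
       realization vartheta ll u v x = realization theta l u v x).
Proof.
move=> _ _ L_gt0 _ _ _ _ size_l size_ll _ _ _ nparams_le L_le_LL ll0 llL l_le_ll ll_wide.
case: L L_gt0 size_l L_le_LL llL l_le_ll ll_wide => // L _ size_l L_le_LL llL l_le_ll ll_wide.
case: LL size_ll nparams_le L_le_LL llL ll_wide => // LL size_ll nparams_le L_le_LL llL ll_wide.
have c_ge1 : 1 <= Num.max 1 (maxnorm theta) by rewrite le_max lexx.
have norm_theta : maxnorm theta <= Num.max 1 (maxnorm theta) by rewrite le_max lexx orbT.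
have l_le_ll' i : (i <= L)%N -> (nth 0 l i <= nth 0 ll i)%N.
  by case: i => [_|i iL]; [rewrite ll0 | exact: l_le_ll].
have [vt [size_vt [norm_vt real_vt]]] := net_embed_exists u v c_ge1
  norm_theta size_l size_ll L_le_LL l_le_ll' llL ll_wide.
have size_vt_le : (size vt <= dd)%N by rewrite size_vt nparams_sum size_ll.
exists (vt ++ nseq (dd - size vt) 0); split; first by rewrite size_cat size_nseq subnKC.
split; first by apply: maxnorm_cat_le norm_vt _; rewrite maxnorm_nseq0 (le_trans ler01 c_ge1).
move=> x sx; rewrite -(real_vt x (nseq (dd - size vt) 0) sx).
by rewrite -[head 0 ll]/(nth 0 ll 0) ll0 subnn cats0.
Qed.
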